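(* Let $\lambda_{\max}>1$ and let $F:[0,\lambda_{\max}]\to\mathbb{R}_+$ be continuously differentiable with $F(0)=0$, such that $F(x)<F^\star$ for all $x\in[0,1)$, $F'(1)>0$, and $F$ is not concave-like. For $U\ge0$ define the dual function $$q(U)=\inf_{\alpha}\big\{\mathbb{E}_\alpha[-F(X)+UX]-U\big\},$$ the infimum over probability measures $\alpha$ on $[0,\lambda_{\max}]$ (with $X\sim\alpha$). Let $U^\star$ be an optimal solution of $\max_{U\ge0}q(U)$. Then $q(U^\star)=\max_{U\ge0}q(U)=-F^\star$, and there exists $L>0$ such that $$q(U^\star)\ge q(U)+L|U^\star-U|\quad\text{for all }U\ge0.$$
   Context: $F^\star=\sup\{\mathbb{E}_\alpha[F(X)]:\alpha$ a probability measure on $[0,\lambda_{\max}]$, $X\sim\alpha$, $\mathbb{E}_\alpha[X]\le1\}$. $F$ is concave-like if for all $x_1,x_2\in[0,\lambda_{\max}]\setminus\{1\}$, $p\in(0,1)$ with $px_1+(1-p)x_2=1$, we have $F(1)>pF(x_1)+(1-p)F(x_2)$. *)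

From mathcomp Require Import all_boot all_algebra.
From mathcomp Require Import all_classical all_reals all_analysis.
Import GRing.Theory Num.Theory numFieldNormedType.Exports.
Local Open Scope ring_scope.
Local Open Scope classical_set_scope.

Definition Idom {R : realType} (lmax : R) : set R := `[0%R, lmax].

Definition prob_on {R : realType} (lmax : R) (alpha : probability R R) : Prop :=
  alpha (Idom lmax) = 1%E.

Definition Ealpha {R : realType} (lmax : R) (alpha : probability R R) (g : R -> R)
  : \bar R := (\int[alpha]_(x in Idom lmax) (g x)%:E)%E.

Definition Fstar {R : realType} (lmax : R) (F : R -> R) : \bar R :=
  ereal_sup [set Ealpha lmax alpha F | alpha in
     [set alpha : probability R R | prob_on lmax alpha /\
                                    (Ealpha lmax alpha id <= 1%:E)%E]].

Definition qdual {R : realType} (lmax : R) (F : R -> R) (U : R) : \bar R :=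
  ereal_inf [set (Ealpha lmax alpha (fun x => (- F x + U * x)%R) - U%:E)%E | alpha in
     [set alpha : probability R R | prob_on lmax alpha]].

Definition concave_like {R : realType} (lmax : R) (F : R -> R) : Prop :=
  forall x1 x2 p : R,
    x1 \in Idom lmax -> x2 \in Idom lmax -> x1 != 1 -> x2 != 1 ->
    0 < p < 1 -> p * x1 + (1 - p) * x2 = 1 ->
    F 1 > p * F x1 + (1 - p) * F x2.

(* F is continuously differentiable on the closed interval [a, b]:
   continuous on [a,b], differentiable on (a,b), and its derivative extends to
   a continuous function on [a,b] (equivalently, one-sided derivatives at the
   endpoints exist and F' is continuous on [a,b]). *)
Definition C1_on {R : realType} (a b : R) (F : R -> R) : Prop :=
  {within `[a, b], continuous F} /\
  (forall x, a < x < b -> derivable F x 1) /\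
  exists G : R -> R, {within `[a, b], continuous G} /\
                     forall x, a < x < b -> F^`() x = G x.

(* Put L_U(x) = F(x) + U (1 - x) ([lagr F U x]). Testing Dirac masses shows
   q(U) = - max_[0, lmax] L_U, and integrating F <= max L_U - U + U x against a law with mean
   at most 1 gives weak duality F* <= max L_U for U >= 0. Let phi = max L_Ustar. If L_Ustar had
   no maximiser in [0, 1] (resp. in [1, lmax] while Ustar > 0), raising (resp. lowering) U a
   little would lower max L_U, against the optimality of Ustar; and as F is not concave-like,
   a maximiser at 1 forces maximisers on both sides of 1. So phi is attained at some a < 1
   and, if Ustar > 0, at some b > 1. The law with mean 1 on {a, b} (the Dirac mass at a if
   Ustar = 0) has E F(X) = phi, hence F* = phi = - q(Ustar). Finally
   q(U) <= - L_U(a) = q(Ustar) - (1 - a)(U - Ustar), and similarly with b when U < Ustar,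
   so L = min(1 - a, b - 1) works. *)

From HB Require Import structures.
From mathcomp Require Import all_boot all_algebra.
From mathcomp Require Import all_classical all_reals all_analysis.
From mathcomp Require Import unstable measurable_realfun ring lra.
Import GRing.Theory Num.Theory order.Order.TTheory numFieldNormedType.Exports.

Local Open Scope ring_scope.
Local Open Scope classical_set_scope.

Section two_point_law.
Context d (T : measurableType d) (R : realType) (a b : T) (p : R).
Hypotheses (p_ge0 : 0 <= p) (p_le1 : p <= 1).

Definition mix2 : set T -> \bar R :=
  measure_add (mscale (NngNum p_ge0) \d_a) (mscale (NngNum (onem_ge0 p_le1)) \d_b).

HB.instance Definition _ := Measure.on mix2.

Lemma mix2E A : mix2 A = (p%:E * \d_a A + p.~%:E * \d_b A)%E.
Proof. by rewrite /mix2 measure_addE. Qed.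

Let mix2_setT : mix2 setT = 1%E.
Proof. by rewrite mix2E !diracT !mule1 -EFinD add_onemK. Qed.

HB.instance Definition _ := Measure_isProbability.Build _ _ _ mix2 mix2_setT.

Lemma ge0_integral_mix2 (D : set T) (f : T -> R) : measurable D -> D a -> D b ->
  measurable_fun D f -> (forall x, D x -> 0 <= f x) ->
  (\int[mix2]_(x in D) (f x)%:E = (p * f a + p.~ * f b)%:E)%E.
Proof.
move=> mD Da Db mf f_ge0.
have mfE : measurable_fun D (EFin \o f) by exact/measurable_EFinP.
have fE_ge0 x : D x -> (0 <= (f x)%:E)%E by move=> Dx; rewrite lee_fin f_ge0.
rewrite ge0_integral_measure_add // !ge0_integral_mscale // !integral_dirac //.
by rewrite !diracE !mem_set // !mul1e -!EFinM -EFinD.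
Qed.

End two_point_law.
Arguments mix2 {d T R} a b {p}.

Lemma within_continuous_integrable {R : realType} (mu : {finite_measure set R -> \bar R})
    (A : set R) (f : R -> R) :
  compact A -> {within A, continuous f} -> mu.-integrable A (EFin \o f).
Proof.
move=> cA cf; have mA := compact_measurable cA.
apply: measurable_bounded_integrable => //.
- by rewrite -ge0_fin_numE // fin_num_measure.
- exact: subspace_continuous_measurable_fun.
- have /compact_bounded[M [_ mrt]] := continuous_compact cf cA.
  by exists M; split; rewrite ?num_real // => ? ? ? ?; exact: mrt.
Qed.

Lemma within_continuousD {R : realType} {A : set R} {f g : R -> R} :
  {within A, continuous f} -> {within A, continuous g} ->
  {within A, continuous (fun x => f x + g x)}.
Proof. by move=> cf cg x; exact: cvgD (cf x) (cg x). Qed.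

Lemma within_continuousN {R : realType} {A : set R} {f : R -> R} :
  {within A, continuous f} -> {within A, continuous (fun x => - f x)}.
Proof. by move=> cf x; exact: cvgN (cf x). Qed.

Section expectation_on_Idom.
Context {R : realType} {lmax : R}.
Local Notation D := (Idom lmax).
Local Notation E := (Ealpha lmax).

Lemma IdomE t : D t = (0 <= t <= lmax) :> Prop.
Proof. by rewrite /Idom /= in_itv. Qed.

Lemma measurable_Idom : measurable D.
Proof. exact: measurable_itv. Qed.

Lemma Ealpha_le (alpha : probability R R) (f g : R -> R) :
  {within D, continuous f} -> {within D, continuous g} ->
  (forall x, D x -> f x <= g x) -> (E alpha f <= E alpha g)%E.
Proof.
move=> cf cg fg; apply: le_integral; first exact: measurable_Idom.
- exact/within_continuous_integrable/cf/segment_compact.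
- exact/within_continuous_integrable/cg/segment_compact.
- by move=> x /[!inE] Dx; rewrite lee_fin fg.
Qed.

Lemma Ealpha_cst (alpha : probability R R) (c : R) : prob_on lmax alpha ->
  E alpha (fun=> c) = c%:E.
Proof.
move=> alphaD; transitivity (\int[alpha]_(x in D) cst c%:E x)%E; first by [].
by rewrite (integral_cst _ measurable_Idom) [X in (_ * X)%E](_ : _ = 1%E) ?mule1.
Qed.

Lemma Ealpha_affine (alpha : probability R R) (c k : R) : prob_on lmax alpha ->
  E alpha (fun x => c + k * x) = (c%:E + k%:E * E alpha id)%E.
Proof.
move=> alphaD; rewrite /Ealpha.
have cD := @segment_compact R 0 lmax.
have int_id : alpha.-integrable D (EFin \o id).
  apply: within_continuous_integrable => //.
  by apply: continuous_subspaceT => ?; exact: cvg_id.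
have int_c : alpha.-integrable D (EFin \o cst c).
  apply: within_continuous_integrable => //.
  by apply: continuous_subspaceT => ?; exact: cvg_cst.
under eq_integral do rewrite EFinD EFinM.
rewrite (integralD measurable_Idom int_c (integrableZl measurable_Idom k int_id)).
rewrite (integralZl measurable_Idom int_id); congr (_ + _)%E; exact: Ealpha_cst.
Qed.

Lemma prob_on_dirac (c : R) : D c -> prob_on lmax \d_c.
Proof.
by move=> Dc; rewrite /prob_on; change ((\1_D c : R)%:E = 1%E); rewrite indicE mem_set.
Qed.

Lemma Ealpha_dirac {c : R} {f : R -> R} : D c -> {within D, continuous f} ->
  E \d_c f = (f c)%:E.
Proof.
move=> Dc cf; rewrite /Ealpha integral_dirac; first last.
- apply/measurable_EFinP; exact: subspace_continuous_measurable_fun measurable_Idom cf.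
- exact: measurable_Idom.
by rewrite diracE mem_set // mul1e.
Qed.

Section two_point.
Context {a b p : R} (p_ge0 : 0 <= p) (p_le1 : p <= 1).
Hypotheses (Da : D a) (Db : D b).

Lemma prob_on_mix2 : prob_on lmax (mix2 a b p_ge0 p_le1).
Proof.
transitivity (mix2 a b p_ge0 p_le1 D); first by [].
by rewrite mix2E !diracE !mem_set // !mule1 -EFinD add_onemK.
Qed.

Lemma Ealpha_mix2 {f : R -> R} :
  {within D, continuous f} -> (forall x, D x -> 0 <= f x) ->
  E (mix2 a b p_ge0 p_le1) f = (p * f a + p.~ * f b)%:E.
Proof.
move=> cf f_ge0; apply: ge0_integral_mix2 => //; first exact: measurable_Idom.
exact: subspace_continuous_measurable_fun measurable_Idom cf.
Qed.

End two_point.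
End expectation_on_Idom.

Section lagrangian.
Context {R : realType} {lmax : R} {F : R -> R}.
Local Notation D := (Idom lmax).
Hypothesis F_cont : {within D, continuous F}.

Definition lagr (U x : R) := F x + U * (1 - x).

Lemma lagr_shift (U V x : R) : lagr V x = lagr U x + (V - U) * (1 - x).
Proof. by rewrite /lagr; ring. Qed.

Lemma lagr_continuous (U : R) : {within D, continuous (lagr U)}.
Proof.
have affine_cont : {within D, continuous (fun x => U * (1 - x))}.
  apply: continuous_subspaceT => x.
  by apply: cvgM; [exact: cvg_cst | apply: cvgB; [exact: cvg_cst | exact: cvg_id]].
exact: within_continuousD F_cont affine_cont.
Qed.

Lemma lagr_argmax (U : R) : 0 <= lmax ->
  exists2 c, D c & forall t, D t -> lagr U t <= lagr U c.
Proof. by move=> lmax_ge0; have [c] := EVT_max lmax_ge0 (lagr_continuous U); exists c. Qed.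

Let integrand_continuous (U : R) : {within D, continuous (fun x => - F x + U * x)}.
Proof.
have linear_cont : {within D, continuous (fun x => U * x)}.
  by apply: continuous_subspaceT => x; apply: cvgM; [exact: cvg_cst | exact: cvg_id].
exact: within_continuousD (within_continuousN F_cont) linear_cont.
Qed.

Lemma qdual_le_lagr (U c : R) : D c -> (qdual lmax F U <= (- lagr U c)%:E)%E.
Proof.
move=> Dc; apply: ge_ereal_inf.
exists (Ealpha lmax \d_c (fun x => (- F x + U * x)%R) - U%:E)%E.
  by exists \d_c => //; exact: prob_on_dirac.
by rewrite Ealpha_dirac // -EFinB lee_fin /lagr; lra.
Qed.

Lemma qdual_max {U c : R} : D c -> (forall t, D t -> lagr U t <= lagr U c) ->
  qdual lmax F U = (- lagr U c)%:E.
Proof.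
move=> Dc c_max; apply/le_anti; rewrite qdual_le_lagr //=.
apply/ereal_infP => _ [alpha alphaD <-].
rewrite leeBrDr // -EFinD -(Ealpha_cst alpha _ alphaD).
apply: Ealpha_le => //; first by apply: continuous_subspaceT => ?; exact: cvg_cst.
by move=> x Dx; have := c_max x Dx; rewrite /lagr; lra.
Qed.

Lemma exists_lagr_ge (U phi : R) : 0 <= lmax -> (qdual lmax F U <= (- phi)%:E)%E ->
  exists2 t, D t & phi <= lagr U t.
Proof.
move=> lmax_ge0; have [c Dc c_max] := lagr_argmax U lmax_ge0.
by rewrite (qdual_max Dc c_max) lee_fin lerN2 => ?; exists c.
Qed.

Lemma Fstar_le_lagr {U c : R} : 0 <= U -> (forall t, D t -> lagr U t <= c) ->
  (Fstar lmax F <= c%:E)%E.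
Proof.
move=> U_ge0 lagr_le; apply/ereal_supP => _ [alpha [alphaD mean_le1] <-].
have F_le : (Ealpha lmax alpha F <= Ealpha lmax alpha (fun x => (c - U + U * x)%R))%E.
  apply: Ealpha_le => //.
    apply: continuous_subspaceT => x.
    by apply: cvgD; [exact: cvg_cst | apply: cvgM; [exact: cvg_cst | exact: cvg_id]].
  by move=> x Dx; have := lagr_le x Dx; rewrite /lagr; lra.
apply: (le_trans F_le); rewrite Ealpha_affine //.
apply: le_trans (leeD2l _ (lee_wpmul2l _ mean_le1)) _; first by rewrite lee_fin.
by rewrite -EFinM -EFinD lee_fin; lra.
Qed.

Let id_continuous : {within D, continuous (@id R)}.
Proof. exact: continuous_subspaceT (fun _ => cvg_id). Qed.

Lemma Fstar_ge_dirac (a : R) : D a -> a <= 1 -> ((F a)%:E <= Fstar lmax F)%E.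
Proof.
move=> Da a_le1; rewrite -(Ealpha_dirac Da F_cont); apply: ereal_sup_ubound.
exists \d_a => //; split; first exact: prob_on_dirac.
by rewrite Ealpha_dirac // lee_fin.
Qed.

Lemma Fstar_ge_mix2 (a b p : R) (p_ge0 : 0 <= p) (p_le1 : p <= 1) :
  (forall x, D x -> 0 <= F x) -> D a -> D b -> p * a + p.~ * b <= 1 ->
  ((p * F a + p.~ * F b)%:E <= Fstar lmax F)%E.
Proof.
move=> F_ge0 Da Db mean_le1.
rewrite -(Ealpha_mix2 p_ge0 p_le1 Da Db F_cont F_ge0); apply: ereal_sup_ubound.
exists (mix2 a b p_ge0 p_le1) => //; split; first exact: prob_on_mix2.
by rewrite Ealpha_mix2 // => x; rewrite IdomE => /andP[].
Qed.

Lemma not_concave_like_max_straddle {U : R} : ~ concave_like lmax F ->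
  (forall t, D t -> lagr U t <= lagr U 1) ->
  exists a b, [/\ D a, D b, a < 1 < b, lagr U a = lagr U 1 & lagr U b = lagr U 1].
Proof.
move=> F_not_cl one_max; apply: contrapT => none.
apply: F_not_cl => x1 x2 p /set_mem Dx1 /set_mem Dx2 x1_neq1 x2_neq1.
move=> /andP[p_gt0 p_lt1] mean1.
rewrite ltNge; apply/negP => F1_le.
have L1 := one_max _ Dx1; have L2 := one_max _ Dx2.
have mix_lagr : p * lagr U x1 + (1 - p) * lagr U x2 = p * F x1 + (1 - p) * F x2.
  have -> : p * lagr U x1 + (1 - p) * lagr U x2 =
    p * F x1 + (1 - p) * F x2 + U * (1 - (p * x1 + (1 - p) * x2)) by rewrite /lagr; ring.
  by rewrite mean1 subrr mulr0 addr0.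
have F1 : lagr U 1 = F 1 by rewrite /lagr subrr mulr0 addr0.
have eq1 : lagr U x1 = lagr U 1 by nra.
have eq2 : lagr U x2 = lagr U 1 by nra.
move: x1_neq1; rewrite neq_lt => /orP[x1_lt1 | x1_gt1].
- by apply: none; exists x1, x2; split => //; apply/andP; split => //; nra.
- by apply: none; exists x2, x1; split => //; apply/andP; split => //; nra.
Qed.

End lagrangian.
Arguments lagr {R} F U x.

Lemma EVT_gap {R : realType} {f : R -> R} {x y c : R} : x <= y ->
  {within `[x, y], continuous f} -> (forall t, x <= t <= y -> f t < c) ->
  exists2 eps, 0 < eps & forall t, x <= t <= y -> f t <= c - eps.
Proof.
move=> xy cf f_lt; have [m] := EVT_max xy cf; rewrite in_itv /= => m_in m_max.
exists (c - f m); first by rewrite subr_gt0 f_lt.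
by move=> t t_in; have := m_max t; rewrite in_itv /= => /(_ t_in); lra.
Qed.

Section optimal_multiplier.
Context {R : realType} {lmax : R} {F : R -> R} {Ustar phi : R}.
Local Notation D := (Idom lmax).
Hypotheses (lmax_gt1 : 1 < lmax) (F_cont : {within D, continuous F}).
Hypothesis Ustar_ge0 : 0 <= Ustar.
Hypothesis lagr_le_phi : forall t, D t -> lagr F Ustar t <= phi.
Hypothesis phi_min : forall V : R, 0 <= V -> exists2 t, D t & phi <= lagr F V t.

Let max_or_gap {x y : R} : 0 <= x -> x <= y -> y <= lmax ->
  (exists2 t : R, x <= t <= y & lagr F Ustar t = phi) \/
  exists2 eps : R, 0 < eps & forall t : R, x <= t <= y -> lagr F Ustar t <= phi - eps.
Proof.
move=> x_ge0 xy y_le; have sub_D : `[x, y] `<=` D.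
  by move=> t; rewrite /= in_itv IdomE /= => /andP[? ?]; apply/andP; split; lra.
case: (pselect (exists2 t, x <= t <= y & lagr F Ustar t = phi)) => [|none];
  [by left | right].
apply: EVT_gap xy (continuous_subspaceW sub_D (lagr_continuous F_cont Ustar)) _.
move=> t t_in; rewrite lt_neqAle lagr_le_phi ?andbT; last by apply: sub_D; rewrite /= in_itv.
by apply/eqP => t_max; apply: none; exists t.
Qed.

Lemma max_attained_le1 : exists2 a, D a & a <= 1 /\ lagr F Ustar a = phi.
Proof.
have [[a /andP[a_ge0 a_le1] a_max] | [eps eps_gt0 gap]] :=
  max_or_gap (lexx 0) ler01 (ltW lmax_gt1).
  by exists a; [rewrite IdomE a_ge0 /=; exact: le_trans a_le1 (ltW lmax_gt1) | split].
exfalso; have V_ge0 : 0 <= Ustar + eps / 2 by rewrite addr_ge0 // divr_ge0 // ltW.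
have [t Dt] := phi_min _ V_ge0.
rewrite (lagr_shift Ustar).
move: (Dt); rewrite IdomE => /andP[t_ge0 t_le]; case: (leP t 1) => [t_le1 | t_gt1].
- have t01 : 0 <= t <= 1 by rewrite t_ge0.
  have : 0 <= eps * t by apply: mulr_ge0; lra.
  by have := gap t t01; lra.
- have : 0 < eps * (t - 1) by apply: mulr_gt0; lra.
  by have := lagr_le_phi t Dt; lra.
Qed.

Lemma max_attained_ge1 : 0 < Ustar -> exists2 b, D b & 1 <= b /\ lagr F Ustar b = phi.
Proof.
move=> Ustar_gt0.
have [[b /andP[b_ge1 b_le] b_max] | [eps eps_gt0 gap]] :=
  max_or_gap ler01 (ltW lmax_gt1) (lexx lmax).
  by exists b; [rewrite IdomE b_le andbT; lra | split].
have lmax_gt0 : 0 < lmax := lt_trans ltr01 lmax_gt1.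
exfalso; have [del [del_gt0 del_le del_lmax]] :
    exists del, [/\ 0 < del, del <= Ustar & del * lmax <= eps].
  case: (leP (Ustar * lmax) eps) => [|lt_eps]; first by exists Ustar.
  exists (eps / lmax); split; first exact: divr_gt0.
    by rewrite ler_pdivrMr //; lra.
  by rewrite mulfVK // gt_eqF.
have V_ge0 : 0 <= Ustar - del by rewrite subr_ge0.
have [t Dt] := phi_min _ V_ge0.
rewrite (lagr_shift Ustar).
move: (Dt); rewrite IdomE => /andP[t_ge0 t_le]; case: (ltP t 1) => [t_lt1 | t_ge1].
- have : 0 < del * (1 - t) by apply: mulr_gt0; lra.
  by have := lagr_le_phi t Dt; lra.
- have t1l : 1 <= t <= lmax by rewrite t_ge1.
  have : del * (t - 1) <= del * (lmax - 1) by apply: ler_wpM2l; lra.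
  by have := gap t t1l; lra.
Qed.

Hypothesis F_not_cl : ~ concave_like lmax F.

Lemma max_attained_lt1 : exists2 a, D a & a < 1 /\ lagr F Ustar a = phi.
Proof.
have [a Da [a_le1 a_max]] := max_attained_le1.
have [a_lt1 | a_ge1] := ltP a 1; first by exists a.
have a1 : a = 1 by apply/le_anti; rewrite a_le1.
have one_max t : D t -> lagr F Ustar t <= lagr F Ustar 1.
  by rewrite -a1 a_max; exact: lagr_le_phi.
have [a' [b [Da' _ /andP[a'_lt1 _] a'_max _]]] := not_concave_like_max_straddle F_not_cl one_max.
by exists a' => //; split => //; rewrite a'_max -a_max a1.
Qed.

Lemma max_attained_gt1 : 0 < Ustar -> exists2 b, D b & 1 < b /\ lagr F Ustar b = phi.
Proof.
move=> Ustar_gt0; have [b Db [b_ge1 b_max]] := max_attained_ge1 Ustar_gt0.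
have [b_gt1 | b_le1] := ltP 1 b; first by exists b.
have b1 : b = 1 by apply/le_anti; rewrite b_le1.
have one_max t : D t -> lagr F Ustar t <= lagr F Ustar 1.
  by rewrite -b1 b_max; exact: lagr_le_phi.
have [a [b' [_ Db' /andP[_ b'_gt1] _ b'_max]]] := not_concave_like_max_straddle F_not_cl one_max.
by exists b' => //; split => //; rewrite b'_max -b_max b1.
Qed.

Let qdual_sharp_at (t L U : R) : D t -> lagr F Ustar t = phi ->
  L * `|Ustar - U| <= (U - Ustar) * (1 - t) ->
  (qdual lmax F U + (L * `|Ustar - U|)%:E <= (- phi)%:E)%E.
Proof.
move=> Dt t_max bound; apply: le_trans (leeD2r _ (qdual_le_lagr F_cont U t Dt)) _.
by rewrite -EFinD lee_fin (lagr_shift Ustar) t_max; lra.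
Qed.

Lemma qdual_sharp : exists2 L, 0 < L & forall U, 0 <= U ->
  (qdual lmax F U + (L * `|Ustar - U|)%:E <= (- phi)%:E)%E.
Proof.
have [a Da [a_lt1 a_max]] := max_attained_lt1.
move: (Ustar_ge0); rewrite [_ <= Ustar]le_eqVlt => /orP[/eqP Ustar0 | Ustar_gt0].
  exists (1 - a) => [|U U_ge0]; first by rewrite subr_gt0.
  by apply: qdual_sharp_at Da a_max _; rewrite -Ustar0 sub0r normrN ger0_norm //; lra.
have [b Db [b_gt1 b_max]] := max_attained_gt1 Ustar_gt0.
set L := Num.min (1 - a) (b - 1).
have L_le_a : L <= 1 - a by rewrite ge_min lexx.
have L_le_b : L <= b - 1 by rewrite ge_min lexx orbT.
exists L => [|U U_ge0]; first by rewrite lt_min !subr_gt0 a_lt1.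
have [UU | UU] := leP Ustar U.
- apply: qdual_sharp_at Da a_max _; rewrite ler0_norm ?subr_le0 // opprB.
  have : 0 <= (1 - a - L) * (U - Ustar) by apply: mulr_ge0; lra.
  lra.
- apply: qdual_sharp_at Db b_max _; rewrite gtr0_norm ?subr_gt0 //.
  have : 0 <= (b - 1 - L) * (Ustar - U) by apply: mulr_ge0; lra.
  lra.
Qed.

Hypothesis F_ge0 : forall x, D x -> 0 <= F x.

Lemma Fstar_eq : Fstar lmax F = phi%:E.
Proof.
apply/le_anti; rewrite (Fstar_le_lagr F_cont Ustar_ge0 lagr_le_phi) /=.
have [a Da [a_lt1 a_max]] := max_attained_lt1.
move: (Ustar_ge0); rewrite [_ <= Ustar]le_eqVlt => /orP[/eqP Ustar0 | Ustar_gt0].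
  by rewrite -a_max /lagr -Ustar0 mul0r addr0 Fstar_ge_dirac // ltW.
have [b Db [b_gt1 b_max]] := max_attained_gt1 Ustar_gt0.
pose p := (b - 1) / (b - a).
have p_ge0 : 0 <= p by apply: divr_ge0; lra.
have p_le1 : p <= 1 by rewrite ler_pdivrMr; lra.
have mean1 : p * a + p.~ * b = 1 by rewrite /p /onem; field; lra.
suff <- : p * F a + p.~ * F b = phi by apply: Fstar_ge_mix2; rewrite ?mean1.
have F_eq t : lagr F Ustar t = phi -> F t = phi - Ustar * (1 - t).
  by move<-; rewrite /lagr; ring.
rewrite (F_eq a a_max) (F_eq b b_max).
have -> : p * (phi - Ustar * (1 - a)) + p.~ * (phi - Ustar * (1 - b)) =
  phi - Ustar * (1 - (p * a + p.~ * b)) by rewrite /onem; ring.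
by rewrite mean1 subrr mulr0 subr0.
Qed.

End optimal_multiplier.

Theorem theorem5p5 (R : realType) (lmax : R) (F : R -> R) (Ustar : R) :
  1 < lmax ->
  C1_on 0 lmax F ->
  (forall x, x \in Idom lmax -> 0 <= F x) ->
  F 0 = 0 ->
  (forall x, 0 <= x < 1 -> ((F x)%:E < Fstar lmax F)%E) ->
  0 < F^`() 1 ->
  ~ concave_like lmax F ->
  0 <= Ustar ->
  (forall U, 0 <= U -> (qdual lmax F U <= qdual lmax F Ustar)%E) ->
  qdual lmax F Ustar = (- Fstar lmax F)%E /\
  exists L : R, 0 < L /\
    forall U, 0 <= U ->
      (qdual lmax F U + (L * `|Ustar - U|)%:E <= qdual lmax F Ustar)%E.
Proof.
move=> lmax_gt1 [F_cont _] F_ge0 _ _ _ F_not_cl Ustar_ge0 Ustar_opt.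
have lmax_ge0 : 0 <= lmax by rewrite ltW // (lt_trans ltr01).
have [c Dc c_max] := lagr_argmax F_cont Ustar lmax_ge0.
have qUstar := qdual_max F_cont Dc c_max.
have phi_min V : 0 <= V -> exists2 t, Idom lmax t & lagr F Ustar c <= lagr F V t.
  by move=> V_ge0; apply: exists_lagr_ge F_cont _ _ lmax_ge0 _; rewrite -qUstar Ustar_opt.
have F_ge0' x : Idom lmax x -> 0 <= F x by move=> Dx; apply: F_ge0; rewrite inE.
rewrite qUstar (Fstar_eq lmax_gt1 F_cont Ustar_ge0 c_max phi_min F_not_cl F_ge0') EFinN.
have [L L_gt0 sharp] := qdual_sharp lmax_gt1 F_cont Ustar_ge0 c_max phi_min F_not_cl.
by split => //; exists L.
Qed.
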